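(* Let $p$ be a prime, $n\ge1$, $\mathbb{F}=\mathbb{F}_{p^n}$, $F=p^n$, and $f,g:\mathbb{F}\to[0,1]$. Let $k$ be an integer with $2\le k\le F$, let $A$ be a set of $k$ points at which $|\hat f|$ takes its $k$ largest values (i.e. $|\hat f(a)|\ge|\hat f(b)|$ for all $a\in A$, $b\notin A$), and $B=A-A$. Let $n'$ be an integer with $$1+\frac{\log\binom{k}{2}}{\log p}\ \le\ n'\ <\ 2+\frac{\log\binom{k}{2}}{\log p},\qquad n'\le n,$$ and let $S$ be the set of all $\mathbb{F}_p$-subspaces of $\mathbb{F}$ of dimension $n'$. Suppose $\mathbb{E}(g)>8p^{-1/2}k^{-1}$. Then there exists $W\in S$ such that (i) $B\cap W^\perp=\{0\}$, and (ii) at least $F/4$ elements $t\in\mathbb{F}$ satisfy $\sum_{m\in t+W}g(m)\ge \mathbb{E}(g)|W|/2$.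
   Context: Identify $\mathbb{F}$ with $\mathbb{F}_p^n$ via a fixed standard $\mathbb{F}_p$-basis and let $a\cdot m$ be the dot product; $W^\perp=\{v: v\cdot w=0\ \forall w\in W\}$. With $\omega=e^{2\pi i/p}$, $\hat f(a)=\sum_m f(m)\omega^{a\cdot m}$. $\mathbb{E}(g)=F^{-1}\sum_m g(m)$. *)

From HB Require Import structures.
From mathcomp Require Import all_boot all_order all_algebra.
From mathcomp Require Import all_classical all_reals all_analysis.
From mathcomp Require Import complex.
Set Implicit Arguments. Unset Strict Implicit. Unset Printing Implicit Defensive.
Import Order.TTheory GRing.Theory Num.Theory ComplexField.
Local Open Scope ring_scope.

(* F_{p^n} is identified (as an F_p-vector space) with 'rV['F_p]_n via a fixed basis *)
Definition dotp (p n : nat) (a m : 'rV['F_p]_n) : 'F_p := \sum_(i < n) a ord0 i * m ord0 i.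

Definition Wperp (p n : nat) (W : {vspace 'rV['F_p]_n}) : {set 'rV['F_p]_n} :=
  [set v | [forall w, (w \in W) ==> (dotp v w == 0)]].

Definition omega (R : realType) (p : nat) : R[i] :=
  Complex (cos (2 * pi / p%:R)) (sin (2 * pi / p%:R)).

Definition fourier (R : realType) (p n : nat) (f : 'rV['F_p]_n -> R) (a : 'rV['F_p]_n) : R[i] :=
  \sum_m Complex (f m) 0 * omega R p ^+ (nat_of_ord (dotp a m)).

Definition expect (R : realType) (p n : nat) (g : 'rV['F_p]_n -> R) : R :=
  (p ^ n)%:R^-1 * \sum_m g m.

From HB Require Import structures.
From mathcomp Require Import all_boot all_order all_algebra all_field.
From mathcomp Require Import all_classical all_reals all_analysis.
From mathcomp Require Import complex.
From mathcomp Require Import ring lra zify.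
Set Implicit Arguments. Unset Strict Implicit. Unset Printing Implicit Defensive.
Import Order.TTheory GRing.Theory Num.Theory ComplexField.
Local Open Scope ring_scope.

(* Average over all invertible matrices T the subspace W_T = {m | m T ∈ W_0},
   where W_0 is spanned by the first n' coordinate vectors.  Since GL_n acts
   transitively on nonzero vectors, a fixed nonzero d lies in W_T for a
   fraction at most p^(n'-n) of the T, and in the orthogonal of W_T for a
   fraction at most p^(-n').  A union bound over the k(k-1) nonzero
   differences of A, with p^n' >= p C(k,2), shows that (i) fails for at most
   half of the T.  The coset sums h_T(t) = Σ_(m ∈ t + W_T) g(m) have mean
   E(g)|W_T|, and expanding their variance through the autocorrelation of g
   bounds the variance summed over T by |GL| |W_T| Σ g; by Chebyshev, (ii)
   fails for at most a third of the T as soon as E(g)|W_T| > 16, which the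
   hypothesis on E(g) guarantees.  So some T is good for both.
   Nothing is used about f or its Fourier coefficients: any k-set A works. *)

Lemma card_condE (T : finType) (P Q : pred T) :
  #|[set x | P x && Q x]| = (\sum_(x | P x) Q x)%N.
Proof. by rewrite -sum1dep_card big_mkcondr /=; apply: eq_bigr => x _; case: (Q x). Qed.

Lemma sum_card_rel (I J : finType) (D : {set I}) (E : {set J}) (r : I -> J -> bool) :
  (\sum_(i in D) #|[set j in E | r i j]| = \sum_(j in E) #|[set i in D | r i j]|)%N.
Proof.
under eq_bigr do rewrite card_condE.
by rewrite exchange_big; apply: eq_bigr => j _; rewrite card_condE.
Qed.

Lemma card_offdiag (V : finType) (A : {set V}) :
  #|[set u : V * V | [&& u.1 \in A, u.2 \in A & u.1 != u.2]]| = (#|A| * (#|A| - 1))%N.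
Proof.
have diag_sub : [set (a, a) | a in A] \subset finset.setX A A.
  by apply/fintype.subsetP => _ /imsetP[a Aa ->]; rewrite inE /= Aa.
have card_diag : #|[set (a, a) | a in A]| = #|A| by apply: card_imset => a b [].
rewrite mulnBr muln1 -cardsX -card_diag -(finset.setIidPr diag_sub) -cardsD.
apply: eq_card => -[a b]; rewrite !inE /=.
case Aa: (a \in A); case: (b \in A); rewrite ?andbF //= andbT; congr (~~ _).
by apply/eqP/imsetP => [<- | [c _ [-> ->]]]; first by exists a.
Qed.

Lemma card_ord_lt (n m : nat) : (m <= n)%N -> #|[pred j : 'I_n | (j < m)%N]| = m.
Proof.
move=> le_mn; have widen_inj : injective (widen_ord le_mn).
  by move=> i j eq_ij; apply: val_inj; exact: (congr1 val eq_ij).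
rewrite -[RHS](card_ord m) -(fintype.card_image widen_inj).
apply: eq_card => j; rewrite inE; apply/idP/fintype.imageP => [lt_jm | [i _ ->]].
  by exists (Ordinal lt_jm) => //; apply: val_inj.
exact: (ltn_ord i).
Qed.

Lemma exists_outside_small_sets (I : finType) (D X Y : {set I}) : (0 < #|D|)%N ->
  (2 * #|X| <= #|D|)%N -> (3 * #|Y| <= #|D|)%N ->
  exists2 i, i \in D & (i \notin X) && (i \notin Y).
Proof.
move=> D_gt0 small_X small_Y.
have [D_sub | /fintype.subsetPn[i Di]] := boolP (D \subset X :|: Y).
  by have := subset_leq_card D_sub; rewrite cardsU; lia.
by rewrite !inE negb_or; exists i.
Qed.

Section DifferenceUnionBound.
Variables (I : finType) (V : finZmodType) (D : {set I}) (Y : I -> {set V}) (w : nat).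
Hypothesis YN : forall i b, (- b \in Y i) = (b \in Y i).
Hypothesis card_hits : forall b, b != 0 -> (#|[set i in D | b \in Y i]| * w <= #|D|)%N.

Lemma card_meets_differences (A : {set V}) :
  (#|[set i in D | [exists a in A, exists a' in A, (a != a') && ((a - a')%R \in Y i)]]|
    * 2 * w <= #|A| * (#|A| - 1) * #|D|)%N.
Proof.
set P := [set u : V * V | [&& u.1 \in A, u.2 \in A & u.1 != u.2]].
(* As [Y i] is symmetric, a witness [(a, a')] comes with a second one [(a', a)]. *)
have two_pairs i : [exists a in A, exists a' in A, (a != a') && ((a - a')%R \in Y i)] ->
    (2 <= #|[set u in P | (u.1 - u.2)%R \in Y i]|)%N.
  case/exists_inP => a Aa /exists_inP[a' Aa' /andP[neq_aa' Yaa']].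
  apply: (@leq_trans #|[set (a, a'); (a', a)]|).
    by rewrite cards2 xpair_eqE negb_and neq_aa'.
  apply: subset_leq_card; apply/fintype.subsetP => u.
  rewrite !inE => /orP[] /eqP-> /=; rewrite Aa Aa' ?Yaa' ?(eq_sym a') neq_aa' //.
  by rewrite -YN opprB.
apply: (@leq_trans ((\sum_(i in D) #|[set u in P | (u.1 - u.2)%R \in Y i]|) * w)).
  rewrite leq_mul2r -sum_nat_cond_const big_mkcondr /=; apply/orP; right.
  by apply: leq_sum => i _; case: ifP => // /two_pairs.
rewrite sum_card_rel big_distrl /= -card_offdiag -sum_nat_cond_const.
rewrite [X in (_ <= X)%N](eq_bigl [in P]) => [|u]; last by rewrite inE.
apply: leq_sum => -[a a']; rewrite inE /= => /and3P[_ _ neq_aa'].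
by rewrite card_hits ?subr_eq0.
Qed.

End DifferenceUnionBound.

Section Deviations.
Variables (R : realType) (T : finType) (h : T -> R).

Lemma sum_sqr_sub (a : R) :
  \sum_t (h t - a) ^+ 2 = \sum_t h t ^+ 2 - 2 * a * \sum_t h t + #|T|%:R * a ^+ 2.
Proof.
rewrite (eq_bigr (fun t => h t ^+ 2 - 2 * a * h t + a ^+ 2)) => [|t _]; last by ring.
rewrite !big_split /= sumrN -mulr_sumr sumr_const; congr (_ + _).
by rewrite mulr_natl.
Qed.

Lemma card_le_sub_sqr (a e : R) : 0 <= e ->
  #|[set t | h t <= a - e]|%:R * e ^+ 2 <= \sum_t (h t - a) ^+ 2.
Proof.
move=> e_ge0; rewrite mulr_natl -sumr_const [leRHS](bigID [in [set t | h t <= a - e]]) /=.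
rewrite -[leLHS]addr0; apply: lerD; last by apply: sumr_ge0 => t _; exact: sqr_ge0.
apply: ler_sum => t; rewrite inE => le_ht.
by rewrite -[(h t - a) ^+ 2]sqrrN opprB ler_sqr ?nnegrE //; lra.
Qed.

End Deviations.

Section CosetSums.
Variables (K : finFieldType) (n : nat) (R : realType) (g : 'rV[K]_n -> R).
Local Notation V := 'rV[K]_n.
Local Notation S := (\sum_t g t).

Definition coset_sum (W : {vspace V}) (t : V) : R := \sum_(m | m \in W) g (t + m).

Definition autocorr (d : V) : R := \sum_t g t * g (t + d).

Lemma sum_coset_sum W : \sum_t coset_sum W t = #|W|%:R * S.
Proof.
rewrite /coset_sum exchange_big /= -sum1_card natr_sum mulr_suml.
by apply: eq_bigr => m _; rewrite mul1r [in RHS](reindex_inj (addIr m)).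
Qed.

Lemma sum_coset_sum_sqr W :
  \sum_t coset_sum W t ^+ 2 = #|W|%:R * \sum_(d | d \in W) autocorr d.
Proof.
transitivity (\sum_t \sum_(m | m \in W) \sum_(m' | m' \in W) g (t + m) * g (t + m')).
  apply: eq_bigr => t _; rewrite expr2 mulr_suml.
  by apply: eq_bigr => m _; rewrite mulr_sumr.
rewrite exchange_big -sum1_card natr_sum mulr_suml; apply: eq_bigr => m Wm.
rewrite mul1r exchange_big (reindex_inj (addIr m)) /=; apply: eq_big => [d | d Wd].
  exact: rpredDr.
rewrite /autocorr (reindex_inj (addIr (- m))) /=; apply: eq_bigr => t _.
by rewrite addrNK [d + m]addrC addrA addrNK.
Qed.

Lemma sum_autocorr : \sum_d autocorr d = S ^+ 2.
Proof.
rewrite /autocorr exchange_big /= expr2 mulr_suml; apply: eq_bigr => t _.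
by rewrite -mulr_sumr [in RHS](reindex_inj (addrI t)).
Qed.

Hypothesis g01 : forall m, 0 <= g m <= 1.

Lemma autocorr_ge0 d : 0 <= autocorr d.
Proof.
apply: sumr_ge0 => t _; have /andP[gt_ge0 _] := g01 t.
by have /andP[gtd_ge0 _] := g01 (t + d); exact: mulr_ge0.
Qed.

Lemma autocorr0_le : autocorr 0 <= S.
Proof.
apply: ler_sum => t _; rewrite addr0; have /andP[g_ge0 g_le1] := g01 t.
by rewrite -[leRHS]mulr1 ler_wpM2l.
Qed.

End CosetSums.

Section CosetFamily.
Variables (K : finFieldType) (n : nat) (R : realType) (g : 'rV[K]_n -> R).
Hypothesis g01 : forall m, 0 <= g m <= 1.
Variables (I : finType) (D : {set I}) (W : I -> {vspace 'rV[K]_n}) (w : nat).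
Hypothesis card_W : forall i, i \in D -> #|W i| = w.
Hypothesis card_hits : forall d : 'rV[K]_n, d != 0 ->
  (#|[set i in D | d \in W i]| * #|K| ^ n <= #|D| * w)%N.
Local Notation F := (#|K| ^ n)%N.
Local Notation S := (\sum_t g t).
Local Notation mean := ((F%:R)^-1 * S * w%:R).

Let F_gt0 : (0 : R) < F%:R.
Proof. by rewrite ltr0n expn_gt0 (cardD1 0). Qed.

Lemma sum_autocorr_family : \sum_(i in D) \sum_(d | d \in W i) autocorr g d
  <= #|D|%:R * S + #|D|%:R * w%:R / F%:R * S ^+ 2.
Proof.
have -> : \sum_(i in D) \sum_(d | d \in W i) autocorr g d =
    \sum_d #|[set i in D | d \in W i]|%:R * autocorr g d.
  under eq_bigr do rewrite big_mkcond /=.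
  rewrite exchange_big /=; apply: eq_bigr => d _; rewrite -big_mkcondr /=.
  rewrite (eq_bigl [in [set i in D | d \in W i]]) => [|i]; last by rewrite !inE.
  by rewrite sumr_const mulr_natl.
rewrite (bigD1 0) //=; apply: lerD.
  apply: ler_pM; rewrite ?ler0n ?(autocorr_ge0 g01) ?(autocorr0_le g01) // ler_nat.
  by apply: subset_leq_card; apply/fintype.subsetP => i; rewrite inE => /andP[].
rewrite -sum_autocorr [in leRHS](bigD1 0) //= mulrDr -[leLHS]add0r.
apply: lerD; first by rewrite mulr_ge0 ?divr_ge0 ?(autocorr_ge0 g01).
rewrite mulr_sumr; apply: ler_sum => d nz_d; apply: ler_wpM2r; first exact: autocorr_ge0.
by rewrite ler_pdivlMr ?F_gt0 // -!natrM ler_nat card_hits.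
Qed.

Lemma sum_sqr_dev_family :
  \sum_(i in D) \sum_t (coset_sum g (W i) t - mean) ^+ 2 <= #|D|%:R * w%:R * S.
Proof.
have F_neq0 : F%:R != 0 :> R by rewrite gt_eqF ?F_gt0.
have dev_eq i : i \in D -> \sum_t (coset_sum g (W i) t - mean) ^+ 2 =
    w%:R * \sum_(d | d \in W i) autocorr g d - w%:R ^+ 2 * S ^+ 2 / F%:R.
  move=> Di; rewrite sum_sqr_sub sum_coset_sum sum_coset_sum_sqr card_W // card_mx mul1n.
  by field.
rewrite (eq_bigr _ dev_eq) sumrB -mulr_sumr sumr_const -[_ *+ #|D|]mulr_natl.
apply: (@le_trans _ _ (w%:R * (#|D|%:R * S + #|D|%:R * w%:R / F%:R * S ^+ 2)
    - #|D|%:R * (w%:R ^+ 2 * S ^+ 2 / F%:R))).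
  by rewrite lerD2r ler_wpM2l ?ler0n ?sum_autocorr_family.
by rewrite [leLHS](_ : _ = #|D|%:R * w%:R * S) //; field.
Qed.

Lemma card_sparse_family : 16 * F%:R < w%:R * S ->
  (3 * #|[set i in D |
    (#|[set t | (mean / 2 <= coset_sum g (W i) t)%R]|%:R < F%:R / 4 :> R)%R]| <= #|D|)%N.
Proof.
move=> dense; set B := [set i in D | _].
have S_ge0 : 0 <= S by apply: sumr_ge0 => t _; case/andP: (g01 t).
have half_mean_ge0 : 0 <= mean / 2 by rewrite !mulr_ge0 ?invr_ge0 ?ler0n.
have bad_dev i : i \in B ->
    F%:R * 3 / 4 * (mean / 2) ^+ 2 <= \sum_t (coset_sum g (W i) t - mean) ^+ 2.
  rewrite inE => /andP[_ few_good].
  apply: (le_trans _ (card_le_sub_sqr _ mean half_mean_ge0)).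
  apply: ler_wpM2r; first exact: sqr_ge0.
  set good := [set t | _] in few_good.
  have low_sub : ~: good \subset [set t | coset_sum g (W i) t <= mean - mean / 2].
    have half : mean - mean / 2 = mean / 2 by rewrite {1}(splitr mean) addrK.
    by apply/fintype.subsetP => t; rewrite !inE half -ltNge; apply: ltW.
  have := subset_leq_card low_sub; rewrite -(ler_nat R) => le_low.
  have := cardsC good; rewrite card_mx mul1n => /(congr1 (fun k => k%:R : R)).
  by rewrite natrD => cardF; lra.
have : #|B|%:R * (F%:R * 3 / 4 * (mean / 2) ^+ 2) <= #|D|%:R * w%:R * S.
  apply: (le_trans _ sum_sqr_dev_family); rewrite /B card_condE natr_sum mulr_suml.
  apply: ler_sum => i Di; have [Bi | nBi] := boolP (i \in B).
    by move: (Bi); rewrite inE Di /= => ->; rewrite mul1r bad_dev.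
  move: nBi; rewrite inE Di /= => /negbTE ->; rewrite mul0r.
  by apply: sumr_ge0 => t _; apply: sqr_ge0.
set x := w%:R * S; set b := #|B|%:R; set d := #|D|%:R.
have -> : F%:R * 3 / 4 * (mean / 2) ^+ 2 = 3 * x ^+ 2 / (16 * F%:R).
  by rewrite /x; field; rewrite gt_eqF.
move=> le_bd; have F16_gt0 : 0 < 16 * F%:R :> R by apply: mulr_gt0.
have x_gt0 : 0 < x by apply: lt_trans dense.
have : b * 3 * x * x <= 16 * F%:R * d * x.
  have E1 : b * (3 * x ^+ 2 / (16 * F%:R)) * (16 * F%:R) = b * 3 * x * x.
    by field; rewrite gt_eqF.
  have E2 : d * w%:R * S * (16 * F%:R) = 16 * F%:R * d * x by rewrite /x; ring.
  by rewrite -E1 -E2 ler_wpM2r // ltW.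
rewrite ler_pM2r // => le_bd'.
have : 16 * F%:R * (b * 3) <= 16 * F%:R * d.
  rewrite mulrC; apply: le_trans le_bd'; apply: ler_wpM2l; last exact: ltW.
  by apply: mulr_ge0; rewrite ler0n.
by rewrite ler_pM2l // -(ler_nat R) natrM mulrC.
Qed.

End CosetFamily.

Section UnitmxCounting.
Variables (K : finFieldType) (n : nat).
Local Notation V := 'rV[K]_n.
Local Notation M := 'M[K]_n.
Local Notation GL := [set T : M | T \in unitmx].

Lemma card_unitmx_can (phi psi : M -> M) (P : pred M) :
  {in unitmx, forall T, phi T \in unitmx} -> {in unitmx, forall T, psi T \in unitmx} ->
  {in unitmx, cancel phi psi} -> {in unitmx, cancel psi phi} ->
  #|[set T | (T \in unitmx) && P (phi T)]| = #|[set T | (T \in unitmx) && P T]|.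
Proof.
move=> phiU psiU phiK psiK.
have phi_inj : {in [set T | (T \in unitmx) && P (phi T)] &, injective phi}.
  by move=> S T; rewrite !inE => /andP[uS _] /andP[uT _] /(congr1 psi); rewrite !phiK.
rewrite -(card_in_imset phi_inj); apply: eq_card => T.
apply/imsetP/idP => [[S] | ]; rewrite !inE.
  by case/andP=> uS PS ->; rewrite phiU.
case/andP=> uT PT; exists (psi T); last by rewrite psiK.
by rewrite inE psiU // psiK // uT.
Qed.

Lemma unitmx_row_transitive (d d' : V) : d != 0 -> d' != 0 ->
  exists2 S : M, S \in unitmx & d' = d *m S.
Proof.
move=> nz_d nz_d'.
have rank1 (v : V) : v != 0 -> \rank v = 1%N.
  by move=> nz_v; apply/eqP; rewrite eqn_leq rank_leq_row lt0n mxrank_eq0.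
have [S uS dS] := eq_rank_unitmx (etrans (rank1 _ nz_d) (esym (rank1 _ nz_d'))).
have /eqmxMunitP[c uc ->] : (d' == d *m S)%MS by apply/eqmxP.
exists (c 0 0 *: S); first by rewrite unitmxZ // -det_mx11 -unitmxE.
by rewrite {1}(mx11_scalar c) mul_scalar_mx scalemxAr.
Qed.

Definition unitmx_sending (X : {set V}) (d : V) :=
  #|[set T : M | (T \in unitmx) && (d *m T \in X)]|.

Lemma unitmx_sending_eq (X : {set V}) (d d' : V) : d != 0 -> d' != 0 ->
  unitmx_sending X d = unitmx_sending X d'.
Proof.
move=> nz_d nz_d'; have [S uS ->] := unitmx_row_transitive nz_d nz_d'.
rewrite /unitmx_sending -(card_unitmx_can (phi := mulmx S) (psi := mulmx (invmx S))).
- by apply: eq_card => T; rewrite !inE mulmxA.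
- by move=> T uT; rewrite unitmx_mul uS.
- by move=> T uT; rewrite unitmx_mul unitmx_inv uS.
- by move=> T _; rewrite mulKmx.
- by move=> T _; rewrite mulKVmx.
Qed.

Lemma card_preim_mulmx (X : {set V}) (T : M) : T \in unitmx ->
  #|[set d : V | d *m T \in X]| = #|X|.
Proof.
move=> uT; rewrite -[RHS](card_imset _ (can_inj (mulmxKV uT))); apply: eq_card => d.
rewrite inE; apply/idP/imsetP => [XdT | [e Xe ->]]; last by rewrite mulmxKV.
by exists (d *m T); rewrite ?mulmxK.
Qed.

Lemma card_unitmx_preim (X : {set V}) (T : M) : T \in unitmx ->
  #|[set d : V | (d != 0) && (d *m T \in X)]| = #|X :\ 0|.
Proof.
move=> uT; rewrite -(card_preim_mulmx _ uT); apply: eq_card => d.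
by rewrite !inE mulmx_free_eq0 ?row_free_unit.
Qed.

Lemma sum_unitmx_sending (X : {set V}) :
  (\sum_(d : V | d != 0%R) unitmx_sending X d = #|GL| * #|X :\ 0%R|)%N.
Proof.
rewrite -sum_nat_cond_const.
rewrite (eq_bigr (fun d => \sum_(T | T \in unitmx) (d *m T \in X))%N) => [|d _].
  by rewrite exchange_big; apply: eq_bigr => T uT; rewrite -card_condE card_unitmx_preim.
by rewrite /unitmx_sending card_condE.
Qed.

(* By [unitmx_sending_eq] all nonzero [d] give the same count, so the sum in
   [sum_unitmx_sending] is this count times [#|V| - 1]. *)
Lemma unitmx_sending_le (X : {set V}) (d : V) : (0 : V) \in X -> d != 0 ->
  (unitmx_sending X d * #|K| ^ n <= #|GL| * #|X|)%N.
Proof.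
move=> X0 nz_d.
have card_nz : #|[set d' : V | d' != 0]| = (#|K| ^ n - 1)%N.
  rewrite -[n in (_ ^ n)%N]mul1n -card_mx subn1 -(cardsC1 (0 : V)).
  by apply: eq_card => v; rewrite !inE.
have := sum_unitmx_sending X.
rewrite (eq_bigr (fun=> unitmx_sending X d)) => [|d' nz_d']; last exact: unitmx_sending_eq.
rewrite sum_nat_cond_const card_nz mulnC (cardsD1 0 X) X0 => sum_eq.
have F_gt0 : (0 < #|K| ^ n)%N by rewrite expn_gt0 (cardD1 0).
rewrite -(subnK F_gt0) mulnDr muln1 sum_eq add1n mulnS addnC leq_add2r.
by apply: subset_leq_card; apply/fintype.subsetP => T; rewrite !inE => /andP[].
Qed.

End UnitmxCounting.

Section CoordinateSubspaces.
Variables (K : finFieldType) (n : nat).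
Local Notation V := 'rV[K]_n.
Local Notation M := 'M[K]_n.
Local Notation GL := [set T : M | T \in unitmx].
Implicit Types (Q : pred 'I_n) (T : M) (v m : V).

Definition supported Q : {set V} := [set v : V | [forall j, ~~ Q j ==> (v 0 j == 0)]].

Lemma card_supported Q : #|supported Q| = (#|K| ^ #|Q|)%N.
Proof.
pose to_ffun (v : V) := [ffun j => v 0 j].
have to_ffunK : cancel to_ffun (fun f => \row_j f j).
  by move=> v; apply/rowP => j; rewrite !mxE ffunE.
rewrite -(card_imset _ (can_inj to_ffunK)).
transitivity #|pffun_on (0 : K) Q predT|; last by rewrite card_pffun_on.
apply: eq_card => f; apply/imsetP/pffun_onP => [[v] | [suppf _]].
  rewrite inE => /forallP v_supp ->; split=> //.
  apply/fintype.subsetP => j; rewrite inE ffunE.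
  by apply: contraR => nQj; rewrite (eqP (implyP (v_supp j) nQj)).
exists (\row_j f j); last by apply/ffunP => j; rewrite !ffunE mxE.
rewrite inE; apply/forallP => j; apply/implyP => nQj; rewrite mxE.
by apply: contraR nQj => fj; apply: (fintype.subsetP suppf); rewrite inE.
Qed.

Definition zero_on_mx Q : M := diag_mx (\row_j (~~ Q j)%:R).

Lemma supportedE Q v : (v \in supported Q) = (v *m zero_on_mx Q == 0).
Proof.
rewrite inE mul_mx_diag; apply/forallP/eqP => [v_supp | v0].
  apply/rowP => j; rewrite !mxE; have := v_supp j.
  by case: (Q j) => /= [_|/eqP ->]; rewrite ?mulr0 ?mul0r.
move=> j; apply/implyP => nQj; have /rowP/(_ j) := v0.
by rewrite !mxE nQj mulr1 => ->.
Qed.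

Definition preim_coord_space T Q : {vspace V} :=
  lker (linfun (mulmxr (T *m zero_on_mx Q))).

Lemma mem_preim_coord_space T Q m :
  (m \in preim_coord_space T Q) = (m *m T \in supported Q).
Proof. by rewrite memv_ker lfunE /= supportedE mulmxA. Qed.

Lemma card_preim_coord_space T Q : T \in unitmx ->
  #|preim_coord_space T Q| = (#|K| ^ #|Q|)%N.
Proof.
move=> uT; rewrite -card_supported -(card_preim_mulmx _ uT).
by apply: eq_card => m; rewrite inE mem_preim_coord_space.
Qed.

Lemma dim_preim_coord_space T Q : T \in unitmx ->
  \dim (preim_coord_space T Q) = #|Q|.
Proof.
move=> uT; apply: (expnI (card_finNzRing_gt1 K)).
by rewrite -card_vspace card_preim_coord_space.
Qed.

Lemma card_unitmx_preim_coord_mem Q (d : V) : d != 0 ->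
  (#|[set T in GL | d \in preim_coord_space T Q]| * #|K| ^ n <= #|GL| * #|K| ^ #|Q|)%N.
Proof.
move=> nz_d; rewrite -card_supported.
have -> : #|[set T in GL | d \in preim_coord_space T Q]| = unitmx_sending (supported Q) d.
  by apply: eq_card => T; rewrite !inE mem_preim_coord_space inE.
by apply: unitmx_sending_le nz_d; rewrite supportedE mul0mx.
Qed.

End CoordinateSubspaces.

Section Orthogonality.
Variables (p n : nat).
Local Notation V := 'rV['F_p]_n.
Local Notation M := 'M['F_p]_n.
Local Notation GL := [set T : M | T \in unitmx].
Implicit Types (W : {vspace V}) (a m b x : V) (T : M) (Q : pred 'I_n).

Lemma dotpE a m : dotp a m = (a *m m^T) 0 0 :> 'F_p.
Proof. by rewrite /dotp mxE; apply: eq_bigr => i _; rewrite mxE. Qed.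

Lemma dotp_mulmxr b x T : dotp b (x *m T) = dotp (b *m T^T) x.
Proof. by rewrite !dotpE trmx_mul !mulmxA. Qed.

Lemma Wperp0 W : 0 \in Wperp W.
Proof. by rewrite inE; apply/forallP => w; rewrite dotpE mul0mx mxE eqxx implybT. Qed.

Lemma WperpN W b : (- b \in Wperp W) = (b \in Wperp W).
Proof. by rewrite !inE; apply: eq_forallb => w; rewrite !dotpE mulNmx mxE oppr_eq0. Qed.

Lemma mem_Wperp_preim T Q b : T \in unitmx ->
  (b \in Wperp (preim_coord_space T Q)) =
  (b *m (invmx T)^T \in Wperp (preim_coord_space 1%:M Q)).
Proof.
move=> uT; rewrite !inE; apply/forallP/forallP => [b_perp x | b_perp w].
  apply/implyP; rewrite mem_preim_coord_space mulmx1 -dotp_mulmxr => Wx.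
  by apply: (implyP (b_perp _)); rewrite mem_preim_coord_space mulmxKV.
apply/implyP; rewrite mem_preim_coord_space => Ww.
by rewrite -(mulmxK uT w) dotp_mulmxr (implyP (b_perp _)) ?mem_preim_coord_space ?mulmx1.
Qed.

Lemma Wperp_coord_subset Q :
  Wperp (preim_coord_space 1%:M Q) \subset supported 'F_p (predC Q).
Proof.
apply/fintype.subsetP => b; rewrite !inE => /forallP b_perp; apply/forallP => j.
apply/implyP; rewrite negbK => Qj.
have Wj : delta_mx 0 j \in preim_coord_space (1%:M : M) Q.
  rewrite mem_preim_coord_space mulmx1 inE; apply/forallP => i; apply/implyP.
  by rewrite mxE eqxx /=; case: (eqVneq i j) => [-> | _]; rewrite ?Qj ?eqxx.
by have /eqP := implyP (b_perp _) Wj; rewrite dotpE trmx_delta -colE mxE => ->.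
Qed.

Lemma card_unitmx_Wperp_mem Q b : prime p -> b != 0 ->
  (#|[set T in GL | b \in Wperp (preim_coord_space T Q)]| * p ^ #|Q| <= #|GL|)%N.
Proof.
move=> p_pr nz_b; pose trinv T := (invmx T)^T.
have trinvK : {in unitmx, involutive trinv}.
  by move=> T _; rewrite /trinv -trmx_inv invmxK !trmxK.
have trinv_unit : {in unitmx, forall T, trinv T \in unitmx}.
  by move=> T uT; rewrite unitmx_tr unitmx_inv.
pose X := Wperp (preim_coord_space (1%:M : M) Q).
have -> : #|[set T in GL | b \in Wperp (preim_coord_space T Q)]| = unitmx_sending X b.
  rewrite /unitmx_sending -[RHS](card_unitmx_can _ trinv_unit trinv_unit trinvK trinvK).
  apply: eq_card => T; rewrite [in RHS]inE 2!inE.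
  by apply: andb_id2l => uT; rewrite mem_Wperp_preim.
have cardX : (#|X| * p ^ #|Q| <= p ^ n)%N.
  have -> : (p ^ n = p ^ #|Q| * p ^ #|predC Q|)%N by rewrite -expnD cardC card_ord.
  rewrite mulnC leq_mul2l (leq_trans (subset_leq_card (Wperp_coord_subset Q))) ?orbT //.
  by rewrite card_supported card_Fp.
have := unitmx_sending_le (Wperp0 (preim_coord_space (1%:M : M) Q)) nz_b.
rewrite card_Fp // => le_sending; have F_gt0 : (0 < p ^ n)%N by rewrite expn_gt0 prime_gt0.
rewrite -(leq_pmul2r F_gt0) mulnAC (leq_trans (leq_mul le_sending (leqnn _))) //.
by rewrite -mulnA leq_mul2l cardX orbT.
Qed.

Lemma diffs_Wperp_trivial (A : {set V}) W : (0 < #|A|)%N ->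
  ~~ [exists a in A, exists a' in A, (a != a') && (a - a' \in Wperp W)] ->
  [set x in [set a - b | a in A, b in A] | x \in Wperp W] = [set 0].
Proof.
case/card_gt0P => a0 Aa0 no_pair; apply/setP => x; rewrite inE [in RHS]inE.
apply/andP/eqP => [[/imset2P[a b Aa Ab ->] perp_ab] | ->]; last first.
  by split; [apply/imset2P; exists a0 a0; rewrite ?subrr | exact: Wperp0].
apply/eqP; rewrite subr_eq0; apply: contraNT no_pair => neq_ab.
by apply/exists_inP; exists a => //; apply/exists_inP; exists b; rewrite ?neq_ab.
Qed.

End Orthogonality.

Lemma pmul_leq_expn_ln (R : realType) (p c m : nat) : (1 < p)%N -> (0 < c)%N ->
  (1 : R) + ln c%:R / ln p%:R <= m%:R -> (p * c <= p ^ m)%N.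
Proof.
move=> p_gt1 c_gt0 le_m; have p_gt0 := ltnW p_gt1.
have lnp_gt0 : 0 < ln (p%:R : R) by apply: ln_gt0; rewrite ltr1n.
have lnc_ge0 : 0 <= ln (c%:R : R) by apply: ln_ge0; rewrite ler1n.
case: m le_m => [|m] le_m.
  have : 0 <= ln (c%:R : R) / ln p%:R by rewrite divr_ge0 // ltW.
  by move: le_m => /= ? ?; exfalso; lra.
have : ln (c%:R : R) <= ln ((p ^ m)%:R : R).
  rewrite natrX lnXn ?ltr0n // -[_ *+ m]mulr_natl -ler_pdivrMr //.
  by move: le_m; rewrite -addn1 natrD addrC lerD2r.
rewrite ler_ln ?posrE ?ltr0n ?expn_gt0 ?p_gt0 // ler_nat => le_c.
by rewrite expnS leq_mul2l le_c orbT.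
Qed.

Lemma expect_mul_gt16 (R : realType) (e : R) (p k w : nat) :
  e <= 1 -> (2 <= k)%N -> (0 < p)%N -> (p * (k * (k - 1)) <= 2 * w)%N ->
  8 * (Num.sqrt (p%:R : R))^-1 * k%:R^-1 < e -> 16 < e * w%:R.
Proof.
move=> e_le1 k_ge2 p_gt0 le_w.
have ss : Num.sqrt (p%:R : R) ^+ 2 = p%:R by rewrite sqr_sqrtr ?ler0n.
have s_gt0 : 0 < Num.sqrt (p%:R : R) by rewrite sqrtr_gt0 ltr0n.
move: ss s_gt0; set s := Num.sqrt _ => ss s_gt0 e_gt.
have k_gt0 : (0 : R) < k%:R by rewrite ltr0n (leq_trans _ k_ge2).
have sk_gt0 := mulr_gt0 s_gt0 k_gt0.
have esk : 8 < e * (s * k%:R).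
  rewrite -(ltr_pM2r sk_gt0) in e_gt; apply: le_lt_trans e_gt.
  by rewrite [leRHS](_ : _ = 8) //; field; rewrite !gt_eqF.
have pkk : p%:R * k%:R ^+ 2 <= 4 * w%:R :> R by rewrite -natrX -!natrM ler_nat; nia.
have e_gt0 : 0 < e by rewrite -(pmulr_lgt0 _ sk_gt0) (lt_trans _ esk).
(* [64 < (e s k)^2 = e^2 p k^2 <= 4 e^2 w <= 4 e w], using [e <= 1]. *)
have sq : 8 * 8 < (e * (s * k%:R)) * (e * (s * k%:R)) by rewrite ltr_pM.
have sq_eq : (e * (s * k%:R)) * (e * (s * k%:R)) = e * e * (p%:R * k%:R ^+ 2).
  by rewrite -ss; ring.
have le4w : e * e * (p%:R * k%:R ^+ 2) <= e * (4 * w%:R).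
  apply: (le_trans (ler_wpM2l _ pkk)); first by rewrite mulr_ge0 ?ltW.
  by rewrite -mulrA; apply: ler_piMl => //; rewrite !mulr_ge0 ?ler0n ?ltW.
by rewrite sq_eq in sq; lra.
Qed.

Lemma expect_le1 (R : realType) (p n : nat) (g : 'rV['F_p]_n -> R) : prime p ->
  (forall m, 0 <= g m <= 1) -> expect g <= 1.
Proof.
move=> p_pr g01; have F_gt0 : (0 : R) < (p ^ n)%:R by rewrite ltr0n expn_gt0 prime_gt0.
rewrite /expect ler_pdivrMl // mulr1 (le_trans (_ : _ <= \sum_(t : 'rV['F_p]_n) (1 : R))) //.
  by apply: ler_sum => t _; case/andP: (g01 t).
by rewrite sumr_const card_mx card_Fp // mul1n.
Qed.

Section GeneralLinearAverage.
Variables (p n n' : nat).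
Hypotheses (p_pr : prime p) (le_n'n : (n' <= n)%N).
Local Notation V := 'rV['F_p]_n.
Local Notation GL := [set T : 'M['F_p]_n | T \in unitmx].
Local Notation W T := (preim_coord_space T [pred j : 'I_n | (j < n')%N]).

Lemma card_coord_space_lt (T : 'M['F_p]_n) : T \in unitmx -> #|W T| = (p ^ n')%N.
Proof. by move=> uT; rewrite card_preim_coord_space // card_Fp // card_ord_lt. Qed.

Lemma card_unitmx_pairs_Wperp (A : {set V}) :
  (p * (#|A| * (#|A| - 1)) <= 2 * p ^ n')%N ->
  (2 * #|[set T in GL | [exists a in A, exists a' in A,
      (a != a') && ((a - a')%R \in Wperp (W T))]]| <= #|GL|)%N.
Proof.
move=> le_pairs; set X := #|_|.
have hits b : b != 0 -> (#|[set T in GL | b \in Wperp (W T)]| * p ^ n' <= #|GL|)%N.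
  by move=> nz_b; rewrite -{2}(card_ord_lt le_n'n) card_unitmx_Wperp_mem.
have := card_meets_differences (fun T => @WperpN p n (W T)) hits A; rewrite -/X => le_X.
have w_gt0 : (0 < p ^ n')%N by rewrite expn_gt0 prime_gt0.
have : (X * p * (2 * p ^ n') <= #|GL| * (2 * p ^ n'))%N.
  rewrite mulnAC mulnA (leq_trans (leq_mul le_X (leqnn p))) //.
  by rewrite mulnAC mulnC leq_mul2l mulnC le_pairs orbT.
rewrite leq_pmul2r ?muln_gt0 // => le_Xp.
by rewrite (leq_trans _ le_Xp) // mulnC leq_mul2l prime_gt1 ?orbT.
Qed.

Lemma card_unitmx_sparse_cosets (R : realType) (g : V -> R) :
  (forall m, 0 <= g m <= 1) -> 16 < expect g * (p ^ n')%:R ->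
  (3 * #|[set T in GL |
     (#|[set t | (expect g * (p ^ n')%:R / 2 <= coset_sum g (W T) t)%R]|%:R
       < (p ^ n)%:R / 4 :> R)%R]| <= #|GL|)%N.
Proof.
move=> g01 dense.
have hits d : d != 0 ->
    (#|[set T in GL | d \in W T]| * #|'F_p| ^ n <= #|GL| * p ^ n')%N.
  move=> nz_d; have := card_unitmx_preim_coord_mem [pred j : 'I_n | (j < n')%N] nz_d.
  by rewrite card_ord_lt // [in X in (_ <= X)%N]card_Fp.
have cardW T : T \in GL -> #|W T| = (p ^ n')%N by rewrite inE; apply: card_coord_space_lt.
have := card_sparse_family g01 cardW hits; rewrite card_Fp //; apply.
have F_gt0 : (0 : R) < (p ^ n)%:R by rewrite ltr0n expn_gt0 prime_gt0.
rewrite (_ : (p ^ n')%:R * _ = (p ^ n)%:R * (expect g * (p ^ n')%:R)); last first.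
  by rewrite /expect; field; rewrite gt_eqF.
by rewrite [16 * _]mulrC ltr_pM2l.
Qed.

End GeneralLinearAverage.

Theorem corollary2 (R : realType) (p n : nat) (f g : 'rV['F_p]_n -> R)
  (k n' : nat) (A : {set 'rV['F_p]_n}) :
  prime p -> (1 <= n)%N ->
  (forall m, 0 <= f m <= 1) -> (forall m, 0 <= g m <= 1) ->
  (2 <= k)%N -> (k <= p ^ n)%N ->
  #|A| = k ->
  (forall a b, a \in A -> b \notin A -> `|fourier f b| <= `|fourier f a|) ->
  (1 : R) + ln ('C(k, 2))%:R / ln (p%:R : R) <= n'%:R ->
  (n'%:R : R) < 2 + ln ('C(k, 2))%:R / ln (p%:R : R) ->
  (n' <= n)%N ->
  expect g > 8 * (Num.sqrt (p%:R : R))^-1 * k%:R^-1 ->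
  exists W : {vspace 'rV['F_p]_n},
    \dim W = n' /\
    [set x in [set a - b | a in A, b in A] | x \in Wperp W] = [set 0] /\
    ((p ^ n)%:R / 4 : R) <=
      #|[set t : 'rV['F_p]_n |
          expect g * #|[set m : 'rV['F_p]_n | m \in W]|%:R / 2
            <= \sum_(m : 'rV['F_p]_n | m \in W) g (t + m)]|%:R.
Proof.
move=> p_pr _ _ g01 k_ge2 _ cardA _ ln_lo _ le_n'n expect_gt.
have le_pairs : (p * (k * (k - 1)) <= 2 * p ^ n')%N.
  have C_gt0 : (0 < 'C(k, 2))%N by rewrite bin_gt0.
  have := pmul_leq_expn_ln (prime_gt1 p_pr) C_gt0 ln_lo.
  by rewrite subn1 -[k.-1]bin1 mul_bin_diag mulnCA leq_mul2l => ->; rewrite orbT.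
have dense := expect_mul_gt16 (expect_le1 p_pr g01) k_ge2 (prime_gt0 p_pr) le_pairs expect_gt.
rewrite -cardA in le_pairs.
have GL_gt0 : (0 < #|[set T : 'M['F_p]_n | T \in unitmx]|)%N.
  by apply/card_gt0P; exists 1%:M; rewrite inE unitmx1.
have [T uT /andP[no_pair not_sparse]] := exists_outside_small_sets GL_gt0
  (card_unitmx_pairs_Wperp p_pr le_n'n le_pairs)
  (card_unitmx_sparse_cosets p_pr le_n'n g01 dense).
rewrite inE in uT; exists (preim_coord_space T [pred j : 'I_n | (j < n')%N]).
split; first by rewrite dim_preim_coord_space // card_ord_lt.
split.
  apply: diffs_Wperp_trivial; first by rewrite cardA ltnW.
  by move: no_pair; rewrite inE [T \in _]inE uT.
have cardW : #|[set m in preim_coord_space T [pred j : 'I_n | (j < n')%N]]| = (p ^ n')%N.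
  by rewrite -(card_coord_space_lt p_pr le_n'n uT); apply: eq_card => m; rewrite inE.
by move: not_sparse; rewrite inE [T \in _]inE uT andTb -leNgt cardW.
Qed.
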